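(* Let $\mathbf{V}$ be a variety of interior algebras and $B\in\mathbf{V}$. Then $\mathcal{O}(B)$ is projective in $\gamma(\mathbf{V})$ if and only if $B^*$ is projective in $\mathbf{V}^*$.
   Context: An interior algebra $\langle B,g\rangle$ is a Boolean algebra with an operator $g$ satisfying $g(1)=1$, $g(xy)=g(x)g(y)$, $g(x)\le x$, $gg(x)=g(x)$; $a$ is open if $g(a)=a$. $\mathcal{O}(B)=B^\circ$ is the Heyting algebra of open elements with $a\Rightarrow b=g(-a+b)$, and $\gamma(\mathbf{V})=\{\mathcal{O}(A):A\in\mathbf{V}\}$ (a variety of Heyting algebras). $B^*$ is the subalgebra generated by the open elements; $\mathbf{V}^*$ is the variety generated by the algebras $A\in\mathbf{V}$ with $A=A^*$. *)

Set Implicit Arguments.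

Record IAsig := {
  ia_car :> Type;
  ia_join : ia_car -> ia_car -> ia_car;
  ia_meet : ia_car -> ia_car -> ia_car;
  ia_compl : ia_car -> ia_car;
  ia_zero : ia_car;
  ia_one : ia_car;
  ia_int : ia_car -> ia_car
}.

Arguments ia_join {_}. Arguments ia_meet {_}. Arguments ia_compl {_}.
Arguments ia_zero {_}. Arguments ia_one {_}. Arguments ia_int {_}.

Record is_IA (A : IAsig) : Prop := {
  ia_join_comm : forall x y : A, ia_join x y = ia_join y x;
  ia_meet_comm : forall x y : A, ia_meet x y = ia_meet y x;
  ia_join_distr : forall x y z : A,
      ia_join x (ia_meet y z) = ia_meet (ia_join x y) (ia_join x z);
  ia_meet_distr : forall x y z : A,
      ia_meet x (ia_join y z) = ia_join (ia_meet x y) (ia_meet x z);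
  ia_join_zero : forall x : A, ia_join x ia_zero = x;
  ia_meet_one : forall x : A, ia_meet x ia_one = x;
  ia_join_compl : forall x : A, ia_join x (ia_compl x) = ia_one;
  ia_meet_compl : forall x : A, ia_meet x (ia_compl x) = ia_zero;
  ia_int_one : ia_int (ia_one : A) = ia_one;
  ia_int_meet : forall x y : A, ia_int (ia_meet x y) = ia_meet (ia_int x) (ia_int y);
  ia_int_le : forall x : A, ia_meet (ia_int x) x = ia_int x;
  ia_int_idem : forall x : A, ia_int (ia_int x) = ia_int x
}.

Definition is_hom_IA {A B : IAsig} (f : A -> B) : Prop :=
  (forall x y, f (ia_join x y) = ia_join (f x) (f y)) /\
  (forall x y, f (ia_meet x y) = ia_meet (f x) (f y)) /\
  (forall x, f (ia_compl x) = ia_compl (f x)) /\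
  f ia_zero = ia_zero /\ f ia_one = ia_one /\
  (forall x, f (ia_int x) = ia_int (f x)).

Definition injective {X Y : Type} (f : X -> Y) : Prop :=
  forall x y, f x = f y -> x = y.
Definition surjective {X Y : Type} (f : X -> Y) : Prop :=
  forall y, exists x, f x = y.

Definition IAprod (I : Type) (A : I -> IAsig) : IAsig := {|
  ia_car := forall i, A i;
  ia_join := fun x y i => ia_join (x i) (y i);
  ia_meet := fun x y i => ia_meet (x i) (y i);
  ia_compl := fun x i => ia_compl (x i);
  ia_zero := fun i => ia_zero;
  ia_one := fun i => ia_one;
  ia_int := fun x i => ia_int (x i) |}.

(* A variety of interior algebras: a class of interior algebras closed under
   homomorphic images (H), subalgebras (S, i.e. domains of embeddings) and
   direct products (P). *)
Definition IA_variety (V : IAsig -> Prop) : Prop :=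
  (forall A, V A -> is_IA A) /\
  (forall (A C : IAsig) (f : A -> C), V A -> is_hom_IA f -> surjective f -> V C) /\
  (forall (A C : IAsig) (f : C -> A), V A -> is_hom_IA f -> injective f -> V C) /\
  (forall (I : Type) (A : I -> IAsig), (forall i, V (A i)) -> V (IAprod A)).

Definition IA_gen_variety (K : IAsig -> Prop) : IAsig -> Prop :=
  fun A => forall W, IA_variety W -> (forall C, K C -> W C) -> W A.

Definition projective_IA (K : IAsig -> Prop) (P : IAsig) : Prop :=
  K P /\
  forall (C D : IAsig), K C -> K D ->
  forall f : C -> D, is_hom_IA f -> surjective f ->
  forall h : P -> D, is_hom_IA h ->
  exists k : P -> C, is_hom_IA k /\ forall x, f (k x) = h x.

Inductive gen_open (A : IAsig) : A -> Prop :=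
| go_open : forall x, ia_int x = x -> gen_open A x
| go_join : forall x y, gen_open A x -> gen_open A y -> gen_open A (ia_join x y)
| go_meet : forall x y, gen_open A x -> gen_open A y -> gen_open A (ia_meet x y)
| go_compl : forall x, gen_open A x -> gen_open A (ia_compl x)
| go_zero : gen_open A ia_zero
| go_one : gen_open A ia_one
| go_int : forall x, gen_open A x -> gen_open A (ia_int x).

Definition Bstar (A : IAsig) : IAsig := {|
  ia_car := { x : A | gen_open A x };
  ia_join := fun x y => exist _ _ (go_join (proj2_sig x) (proj2_sig y));
  ia_meet := fun x y => exist _ _ (go_meet (proj2_sig x) (proj2_sig y));
  ia_compl := fun x => exist _ _ (go_compl (proj2_sig x));
  ia_zero := exist _ _ (go_zero A);
  ia_one := exist _ _ (go_one A);
  ia_int := fun x => exist _ _ (go_int (proj2_sig x)) |}.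

(* A = A^* : A is generated by its open elements *)
Definition is_star (A : IAsig) : Prop := forall x : A, gen_open A x.

Definition star_variety (V : IAsig -> Prop) : IAsig -> Prop :=
  IA_gen_variety (fun A => V A /\ is_star A).

Record HAsig := {
  ha_car :> Type;
  ha_meet : ha_car -> ha_car -> ha_car;
  ha_join : ha_car -> ha_car -> ha_car;
  ha_imp : ha_car -> ha_car -> ha_car;
  ha_bot : ha_car;
  ha_top : ha_car
}.

Arguments ha_meet {_}. Arguments ha_join {_}. Arguments ha_imp {_}.
Arguments ha_bot {_}. Arguments ha_top {_}.

Definition is_hom_HA {H K : HAsig} (f : H -> K) : Prop :=
  (forall x y, f (ha_meet x y) = ha_meet (f x) (f y)) /\
  (forall x y, f (ha_join x y) = ha_join (f x) (f y)) /\
  (forall x y, f (ha_imp x y) = ha_imp (f x) (f y)) /\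
  f ha_bot = ha_bot /\ f ha_top = ha_top.

Definition iso_HA (H K : HAsig) : Prop :=
  exists f : H -> K, is_hom_HA f /\ injective f /\ surjective f.

Definition projective_HA (K : HAsig -> Prop) (P : HAsig) : Prop :=
  K P /\
  forall (C D : HAsig), K C -> K D ->
  forall f : C -> D, is_hom_HA f -> surjective f ->
  forall h : P -> D, is_hom_HA h ->
  exists k : P -> C, is_hom_HA k /\ forall x, f (k x) = h x.

(* Join and bottom are written g(a + b) and g 0: in an interior algebra
   these equal a + b and 0 for open a, b, and writing them this way makes
   openness immediate from g g = g. *)
Section Opens.
Variables (A : IAsig) (HA : is_IA A).

Definition open_el := { x : A | ia_int x = x }.

Definition op_int (x : A) : open_el := exist _ (ia_int x) (ia_int_idem HA x).

Lemma op_meet_proof (a b : open_el) :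
  ia_int (ia_meet (proj1_sig a) (proj1_sig b)) = ia_meet (proj1_sig a) (proj1_sig b).
Proof.
  rewrite (ia_int_meet HA). now rewrite (proj2_sig a), (proj2_sig b).
Qed.

Definition Opens : HAsig := {|
  ha_car := open_el;
  ha_meet := fun a b => exist _ _ (op_meet_proof a b);
  ha_join := fun a b => op_int (ia_join (proj1_sig a) (proj1_sig b));
  ha_imp := fun a b => op_int (ia_join (ia_compl (proj1_sig a)) (proj1_sig b));
  ha_bot := op_int ia_zero;
  ha_top := exist _ ia_one (ia_int_one HA) |}.
End Opens.

Definition gamma (V : IAsig -> Prop) : HAsig -> Prop :=
  fun H => exists (A : IAsig) (HA : is_IA A), V A /\ iso_HA H (Opens HA).

(* Every element of B^* is a Boolean combination of open elements, and such a
   combination can be put in conjunctive normal form, a meet of clauses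
   -a + b with a, b open.  A clause equals 1 exactly when a <= b, and the
   interior of a clause is the Heyting implication a => b.  Hence a Heyting
   homomorphism O(A) -> O(C) extends, uniquely, to an interior algebra
   homomorphism A^* -> C: inequalities between Boolean combinations of opens
   reduce to inequalities between opens, which the homomorphism preserves.
   So homomorphisms out of B^* are the same as Heyting homomorphisms out of
   O(B), surjections in V^* restrict to surjections between the open elements,
   and surjections O(A1) -> O(A2) extend to surjections A1^* -> A2^*; lifting
   problems therefore transfer in both directions. *)

From Stdlib Require Import List ProofIrrelevance ClassicalEpsilon.
Import ListNotations.

Declare Scope ia_scope.
Delimit Scope ia_scope with ia.
Notation "x + y" := (ia_join x y) : ia_scope.
Notation "x * y" := (ia_meet x y) : ia_scope.
Notation "- x" := (ia_compl x) : ia_scope.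
Open Scope ia_scope.

Definition ia_le {A : IAsig} (x y : A) : Prop := x * y = x.

Section BooleanAlgebra.
Context {A : IAsig} (HA : is_IA A).
Notation join_comm := (ia_join_comm HA).
Notation meet_comm := (ia_meet_comm HA).
Notation join_meet_distr := (ia_join_distr HA).
Notation meet_join_distr := (ia_meet_distr HA).
Notation join_x0 := (ia_join_zero HA).
Notation meet_x1 := (ia_meet_one HA).
Notation join_compl := (ia_join_compl HA).
Notation meet_compl := (ia_meet_compl HA).

Lemma meet_xx (x : A) : x * x = x.
Proof.
  rewrite <- (join_x0 (x * x)), <- (meet_compl x), <- meet_join_distr, join_compl, meet_x1.
  reflexivity.
Qed.

Lemma meet_1x (x : A) : ia_one * x = x.
Proof. rewrite meet_comm; apply meet_x1. Qed.

Lemma join_0x (x : A) : ia_zero + x = x.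
Proof. rewrite join_comm; apply join_x0. Qed.

Lemma join_x1 (x : A) : x + ia_one = ia_one.
Proof.
  rewrite <- (meet_x1 (x + ia_one)). rewrite <- (join_compl x) at 2.
  rewrite <- join_meet_distr, meet_1x. apply join_compl.
Qed.

Lemma meet_x0 (x : A) : x * ia_zero = ia_zero.
Proof.
  rewrite <- (join_x0 (x * ia_zero)). rewrite <- (meet_compl x) at 2.
  rewrite <- meet_join_distr, join_0x. apply meet_compl.
Qed.

Lemma join_1x (x : A) : ia_one + x = ia_one.
Proof. rewrite join_comm; apply join_x1. Qed.

Lemma meet_0x (x : A) : ia_zero * x = ia_zero.
Proof. rewrite meet_comm; apply meet_x0. Qed.

Lemma join_meet_absorb (x y : A) : x + x * y = x.
Proof. rewrite <- (meet_x1 x) at 1. rewrite <- meet_join_distr, join_1x. apply meet_x1. Qed.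

Lemma meet_join_absorb (x y : A) : x * (x + y) = x.
Proof. rewrite <- (join_x0 x) at 1. rewrite <- join_meet_distr, meet_0x. apply join_x0. Qed.

Lemma meet_compl_cancel (a x y : A) : a * x = a * y -> - a * x = - a * y -> x = y.
Proof.
  intros H1 H2. rewrite <- (meet_x1 x), <- (meet_x1 y), <- (join_compl a), !meet_join_distr.
  rewrite (meet_comm x a), (meet_comm y a), (meet_comm x (- a)), (meet_comm y (- a)), H1, H2.
  reflexivity.
Qed.

Lemma join_compl_cancel (a x y : A) : a + x = a + y -> - a + x = - a + y -> x = y.
Proof.
  intros H1 H2. rewrite <- (join_x0 x), <- (join_x0 y), <- (meet_compl a), !join_meet_distr.
  rewrite (join_comm x a), (join_comm y a), (join_comm x (- a)), (join_comm y (- a)), H1, H2.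
  reflexivity.
Qed.

(* Huntington's axioms do not include associativity; it is recovered by
   cancelling against a and -a. *)
Lemma join_assoc (x y z : A) : x + (y + z) = (x + y) + z.
Proof.
  apply (meet_compl_cancel x).
  - rewrite meet_join_distr, meet_xx, join_meet_absorb, meet_join_distr, meet_join_absorb,
      join_meet_absorb.
    reflexivity.
  - rewrite !meet_join_distr, (meet_comm (- x) x), meet_compl, !join_0x. reflexivity.
Qed.

Lemma meet_assoc (x y z : A) : x * (y * z) = (x * y) * z.
Proof.
  apply (join_compl_cancel x).
  - rewrite join_meet_absorb, join_meet_distr, join_meet_absorb, meet_join_absorb. reflexivity.
  - rewrite !join_meet_distr, (join_comm (- x) x), join_compl, !meet_1x. reflexivity.
Qed.

Lemma join_ACA (w x y z : A) : (w + x) + (y + z) = (w + y) + (x + z).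
Proof.
  rewrite <- !join_assoc. f_equal. rewrite !join_assoc. f_equal. apply join_comm.
Qed.

Lemma join_meet_distr_r (x y z : A) : x * y + z = (x + z) * (y + z).
Proof. rewrite join_comm, join_meet_distr, !(join_comm z). reflexivity. Qed.

Lemma compl_unique (x y : A) : x + y = ia_one -> x * y = ia_zero -> y = - x.
Proof.
  intros H1 H2.
  rewrite <- (meet_x1 y), <- (join_compl x), meet_join_distr, (meet_comm y x), H2, join_0x.
  rewrite <- (meet_x1 (- x)) at 2.
  rewrite <- H1, meet_join_distr, (meet_comm (- x) x), meet_compl, join_0x, meet_comm.
  reflexivity.
Qed.

Lemma compl_involutive (x : A) : - - x = x.
Proof.
  symmetry. apply compl_unique.
  - rewrite join_comm; apply join_compl.
  - rewrite meet_comm; apply meet_compl.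
Qed.

Lemma compl_join (x y : A) : - (x + y) = - x * - y.
Proof.
  symmetry. apply compl_unique.
  - rewrite join_meet_distr, (join_comm x y), <- join_assoc, join_compl, join_x1,
      (join_comm y x), <- join_assoc, join_compl, join_x1, meet_x1.
    reflexivity.
  - rewrite meet_comm, meet_join_distr, <- meet_assoc, (meet_comm (- y) x), meet_assoc,
      (meet_comm (- x) x), meet_compl, meet_0x, <- meet_assoc, (meet_comm (- y) y),
      meet_compl, meet_x0, join_x0.
    reflexivity.
Qed.

Lemma compl_meet (x y : A) : - (x * y) = - x + - y.
Proof.
  rewrite <- (compl_involutive x) at 1. rewrite <- (compl_involutive y) at 1.
  rewrite <- compl_join. apply compl_involutive.
Qed.

Lemma compl_one : - (ia_one : A) = ia_zero.
Proof. rewrite <- (meet_1x (- ia_one)). apply meet_compl. Qed.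

Lemma compl_join_eq_one (x y : A) : - x + y = ia_one <-> ia_le x y.
Proof.
  unfold ia_le. split; intro H.
  - rewrite <- (meet_x1 x) at 2. rewrite <- H, meet_join_distr, meet_compl, join_0x.
    reflexivity.
  - rewrite <- H at 1. rewrite compl_meet, <- join_assoc, (join_comm (- y) y), join_compl.
    apply join_x1.
Qed.

Lemma meet_eq_one (x y : A) : x * y = ia_one -> x = ia_one /\ y = ia_one.
Proof.
  intro H. split.
  - rewrite <- (meet_x1 x), <- H, meet_assoc, meet_xx. reflexivity.
  - rewrite <- (meet_x1 y), <- H, (meet_comm x y), meet_assoc, meet_xx. reflexivity.
Qed.

Lemma le_antisym (x y : A) : ia_le x y -> ia_le y x -> x = y.
Proof. unfold ia_le. intros H1 H2. rewrite <- H1, meet_comm. exact H2. Qed.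

Lemma int_zero : ia_int (ia_zero : A) = ia_zero.
Proof. rewrite <- (ia_int_le HA). apply meet_x0. Qed.

Lemma int_join_open (a b : A) : ia_int a = a -> ia_int b = b -> ia_int (a + b) = a + b.
Proof.
  intros Ha Hb.
  assert (int_mono : forall x y : A, ia_le x y -> ia_le (ia_int x) (ia_int y)).
  { unfold ia_le. intros x y Hxy. rewrite <- (ia_int_meet HA), Hxy. reflexivity. }
  assert (Ea : a * ia_int (a + b) = a).
  { rewrite <- Ha at 1 3. apply int_mono, meet_join_absorb. }
  assert (Eb : b * ia_int (a + b) = b).
  { rewrite <- Hb at 1 3. apply int_mono. unfold ia_le. rewrite join_comm. apply meet_join_absorb. }
  rewrite <- (ia_int_le HA), meet_join_distr, (meet_comm _ a), (meet_comm _ b), Ea, Eb.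
  reflexivity.
Qed.

End BooleanAlgebra.

(** * The subalgebra generated by the open elements *)

Lemma open_el_eq {A : IAsig} (a b : open_el A) : proj1_sig a = proj1_sig b -> a = b.
Proof. destruct a, b; simpl; intros ->. f_equal. apply proof_irrelevance. Qed.

Lemma Bstar_eq {A : IAsig} (x y : Bstar A) : proj1_sig x = proj1_sig y -> x = y.
Proof. destruct x, y; simpl; intros ->. f_equal. apply proof_irrelevance. Qed.

Definition open_to_Bstar {A : IAsig} (a : open_el A) : Bstar A :=
  exist _ (proj1_sig a) (go_open A (proj2_sig a)).

Scheme gen_open_dep_ind := Induction for gen_open Sort Prop.

Lemma Bstar_induction {A : IAsig} (P : Bstar A -> Prop) :
  (forall a : open_el A, P (open_to_Bstar a)) ->
  (forall x y, P x -> P y -> P (x + y)) ->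
  (forall x y, P x -> P y -> P (x * y)) ->
  (forall x, P x -> P (- x)) ->
  P ia_zero -> P ia_one ->
  (forall x, P x -> P (ia_int x)) ->
  forall x, P x.
Proof.
  intros Hopen Hjoin Hmeet Hcompl Hzero Hone Hint [x q].
  induction q using gen_open_dep_ind.
  - exact (Hopen (exist _ x e)).
  - exact (Hjoin _ _ IHq1 IHq2).
  - exact (Hmeet _ _ IHq1 IHq2).
  - exact (Hcompl _ IHq).
  - exact Hzero.
  - exact Hone.
  - exact (Hint _ IHq).
Qed.

Lemma Bstar_is_star (A : IAsig) : is_star (Bstar A).
Proof.
  unfold is_star. apply Bstar_induction.
  - intro a. apply go_open, Bstar_eq, (proj2_sig a).
  - apply go_join.
  - apply go_meet.
  - apply go_compl.
  - apply go_zero.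
  - apply go_one.
  - apply go_int.
Qed.

Lemma is_hom_IA_comp {A B C : IAsig} (f : A -> B) (g : B -> C) :
  is_hom_IA f -> is_hom_IA g -> is_hom_IA (fun x => g (f x)).
Proof.
  intros [fj [fm [fc [f0 [f1 fg]]]]] [gj [gm [gc [g0 [g1 gg]]]]].
  repeat split; intros;
    rewrite ?fj, ?fm, ?fc, ?f0, ?f1, ?fg, ?gj, ?gm, ?gc, ?g0, ?g1, ?gg; reflexivity.
Qed.

Lemma is_hom_HA_comp {H K L : HAsig} (f : H -> K) (g : K -> L) :
  is_hom_HA f -> is_hom_HA g -> is_hom_HA (fun x => g (f x)).
Proof.
  intros [fm [fj [fi [f0 f1]]]] [gm [gj [gi [g0 g1]]]].
  repeat split; intros; rewrite ?fm, ?fj, ?fi, ?f0, ?f1, ?gm, ?gj, ?gi, ?g0, ?g1; reflexivity.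
Qed.

Lemma is_hom_HA_id (H : HAsig) : is_hom_HA (fun x : H => x).
Proof. repeat split. Qed.

Lemma iso_HA_refl (H : HAsig) : iso_HA H H.
Proof.
  exists (fun x => x). split; [apply is_hom_HA_id | split].
  - intros x y E; exact E.
  - intros y; exists y; reflexivity.
Qed.

Lemma iso_HA_inverse {H K : HAsig} (i : H -> K) :
  is_hom_HA i -> injective i -> surjective i ->
  exists j : K -> H, is_hom_HA j /\ forall y, i (j y) = y.
Proof.
  intros [im [ij [ii [i0 i1]]]] Hinj Hsurj.
  set (j := fun y => epsilon (inhabits (@ha_top H)) (fun x => i x = y)).
  assert (Hj : forall y, i (j y) = y) by (intro y; apply epsilon_spec, Hsurj).
  exists j. split; [| exact Hj].
  repeat split; intros; apply Hinj; rewrite ?im, ?ij, ?ii, ?i0, ?i1, !Hj; reflexivity.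
Qed.

Lemma Bstar_val_hom (A : IAsig) : is_hom_IA (fun x : Bstar A => proj1_sig x).
Proof. repeat split. Qed.

Lemma Bstar_corestrict {A C : IAsig} (F : Bstar A -> C) :
  is_hom_IA F -> (forall x, gen_open C (F x)) ->
  exists G : Bstar A -> Bstar C, is_hom_IA G /\ forall x, proj1_sig (G x) = F x.
Proof.
  intros [fj [fm [fc [f0 [f1 fg]]]]] Hgen.
  exists (fun x => exist _ (F x) (Hgen x)). split; [| reflexivity].
  repeat split; intros; apply Bstar_eq;
    [apply fj | apply fm | apply fc | apply f0 | apply f1 | apply fg].
Qed.

Lemma Bstar_hom_restrict {B X : IAsig} (HB : is_IA B) (HX : is_IA X) (u : Bstar B -> X) :
  is_hom_IA u ->
  exists k : Opens HB -> Opens HX,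
    is_hom_HA k /\ forall a, proj1_sig (k a) = u (open_to_Bstar a).
Proof.
  intros [uj [um [uc [u0 [u1 ug]]]]].
  assert (Hopen : forall a, ia_int (u (open_to_Bstar a)) = u (open_to_Bstar a)).
  { intro a. rewrite <- ug. f_equal. apply Bstar_eq, (proj2_sig a). }
  exists (fun a => exist (fun y : X => ia_int y = y) _ (Hopen a)). split; [| reflexivity].
  repeat split; intros; apply open_el_eq; simpl.
  - rewrite <- um. f_equal. apply Bstar_eq. reflexivity.
  - rewrite <- uj, <- ug. f_equal. apply Bstar_eq. reflexivity.
  - rewrite <- uc, <- uj, <- ug. f_equal. apply Bstar_eq. reflexivity.
  - rewrite <- u0, <- ug. f_equal. apply Bstar_eq. reflexivity.
  - rewrite <- u1. f_equal. apply Bstar_eq. reflexivity.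
Qed.

Lemma Bstar_hom_ext {A X : IAsig} (u v : Bstar A -> X) :
  is_hom_IA u -> is_hom_IA v ->
  (forall a : open_el A, u (open_to_Bstar a) = v (open_to_Bstar a)) ->
  forall x, u x = v x.
Proof.
  intros [uj [um [uc [u0 [u1 ug]]]]] [vj [vm [vc [v0 [v1 vg]]]]] Hopen.
  apply Bstar_induction; intros;
    rewrite ?uj, ?um, ?uc, ?u0, ?u1, ?ug, ?vj, ?vm, ?vc, ?v0, ?v1, ?vg; congruence.
Qed.

Lemma Bstar_hom_surjective {A C : IAsig} (G : Bstar A -> Bstar C) :
  is_hom_IA G -> (forall b : open_el C, exists x, G x = open_to_Bstar b) -> surjective G.
Proof.
  intros [gj [gm [gc [g0 [g1 gg]]]]] Hopen.
  unfold surjective. apply Bstar_induction; [exact Hopen | ..].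
  - intros y1 y2 [x1 <-] [x2 <-]. exists (x1 + x2). apply gj.
  - intros y1 y2 [x1 <-] [x2 <-]. exists (x1 * x2). apply gm.
  - intros y [x <-]. exists (- x). apply gc.
  - exists ia_zero. exact g0.
  - exists ia_one. exact g1.
  - intros y [x <-]. exists (ia_int x). apply gg.
Qed.

(** * Boolean terms over a lattice and their conjunctive normal form *)

Record lattice_hom {L : HAsig} {X : IAsig} (psi : L -> X) : Prop := {
  lattice_hom_bot : psi ha_bot = ia_zero;
  lattice_hom_top : psi ha_top = ia_one;
  lattice_hom_meet : forall a b, psi (ha_meet a b) = psi a * psi b;
  lattice_hom_join : forall a b, psi (ha_join a b) = psi a + psi b }.
Arguments lattice_hom_bot {L X psi}. Arguments lattice_hom_top {L X psi}.
Arguments lattice_hom_meet {L X psi}. Arguments lattice_hom_join {L X psi}.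

Lemma lattice_hom_comp {L M : HAsig} {X : IAsig} (k : L -> M) (psi : M -> X) :
  is_hom_HA k -> lattice_hom psi -> lattice_hom (fun a => psi (k a)).
Proof.
  intros [km [kj [_ [k0 k1]]]] [p0 p1 pm pj].
  split; intros; rewrite ?km, ?kj, ?k0, ?k1; auto.
Qed.

Lemma open_val_lattice_hom {A : IAsig} (HA : is_IA A) :
  lattice_hom (fun a : Opens HA => proj1_sig a).
Proof.
  split; simpl.
  - apply (int_zero HA).
  - reflexivity.
  - reflexivity.
  - intros a b. apply (int_join_open HA); apply proj2_sig.
Qed.

Inductive bterm (T : Type) : Type :=
| BVar (a : T)
| BJoin (s t : bterm T)
| BMeet (s t : bterm T)
| BCompl (s : bterm T)
| BZero
| BOne.
Arguments BVar {T}. Arguments BJoin {T}. Arguments BMeet {T}. Arguments BCompl {T}.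
Arguments BZero {T}. Arguments BOne {T}.

Fixpoint beval {T : Type} {X : IAsig} (psi : T -> X) (t : bterm T) : X :=
  match t with
  | BVar a => psi a
  | BJoin s u => beval psi s + beval psi u
  | BMeet s u => beval psi s * beval psi u
  | BCompl s => - beval psi s
  | BZero => ia_zero
  | BOne => ia_one
  end.

Section ConjunctiveNormalForm.
Context {L : HAsig}.

(* A pair (a, b) stands for the clause -a + b. *)
Definition clause_eval {X : IAsig} (psi : L -> X) (c : L * L) : X := - psi (fst c) + psi (snd c).

Definition cnf_eval {X : IAsig} (psi : L -> X) (cs : list (L * L)) : X :=
  fold_right (fun c acc => clause_eval psi c * acc) ia_one cs.

Definition clause_join (c d : L * L) : L * L :=
  (ha_meet (fst c) (fst d), ha_join (snd c) (snd d)).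

Definition cnf_join (cs ds : list (L * L)) : list (L * L) :=
  flat_map (fun c => map (clause_join c) ds) cs.

(* -(-a + b) = a * -b is the normal form [(1, a); (b, 0)]. *)
Definition cnf_compl (cs : list (L * L)) : list (L * L) :=
  fold_right (fun c acc => cnf_join [(ha_top, fst c); (snd c, ha_bot)] acc)
    [(ha_top, ha_bot)] cs.

Fixpoint cnf_of (t : bterm L) : list (L * L) :=
  match t with
  | BVar a => [(ha_top, a)]
  | BJoin s u => cnf_join (cnf_of s) (cnf_of u)
  | BMeet s u => cnf_of s ++ cnf_of u
  | BCompl s => cnf_compl (cnf_of s)
  | BZero => [(ha_top, ha_bot)]
  | BOne => []
  end.

Definition himp_cnf (cs : list (L * L)) : L :=
  fold_right (fun c acc => ha_meet (ha_imp (fst c) (snd c)) acc) ha_top cs.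

Section Evaluation.
Context {X : IAsig} (HX : is_IA X) (psi : L -> X) (Hpsi : lattice_hom psi).

Lemma clause_eval_top (a : L) : clause_eval psi (ha_top, a) = psi a.
Proof.
  unfold clause_eval; simpl.
  rewrite (lattice_hom_top Hpsi), (compl_one HX). apply (join_0x HX).
Qed.

Lemma clause_eval_bot (a : L) : clause_eval psi (a, ha_bot) = - psi a.
Proof. unfold clause_eval; simpl. rewrite (lattice_hom_bot Hpsi). apply (ia_join_zero HX). Qed.

Lemma cnf_eval_app cs ds : cnf_eval psi (cs ++ ds) = cnf_eval psi cs * cnf_eval psi ds.
Proof.
  induction cs as [|c cs IH]; simpl.
  - symmetry. apply (meet_1x HX).
  - rewrite IH. apply (meet_assoc HX).
Qed.

Lemma clause_eval_join c d :
  clause_eval psi (clause_join c d) = clause_eval psi c + clause_eval psi d.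
Proof.
  unfold clause_eval, clause_join; simpl.
  rewrite (lattice_hom_meet Hpsi), (lattice_hom_join Hpsi), (compl_meet HX). apply (join_ACA HX).
Qed.

Lemma cnf_eval_join_clause c ds :
  cnf_eval psi (map (clause_join c) ds) = clause_eval psi c + cnf_eval psi ds.
Proof.
  induction ds as [|d ds IH]; simpl.
  - symmetry. apply (join_x1 HX).
  - rewrite IH, clause_eval_join. symmetry. apply (ia_join_distr HX).
Qed.

Lemma cnf_eval_join cs ds :
  cnf_eval psi (cnf_join cs ds) = cnf_eval psi cs + cnf_eval psi ds.
Proof.
  induction cs as [|c cs IH]; simpl.
  - symmetry. apply (join_1x HX).
  - rewrite cnf_eval_app, IH, cnf_eval_join_clause. symmetry. apply (join_meet_distr_r HX).
Qed.

Lemma cnf_eval_compl cs : cnf_eval psi (cnf_compl cs) = - cnf_eval psi cs.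
Proof.
  induction cs as [|c cs IH].
  - change (clause_eval psi (ha_top, ha_bot) * ia_one = - ia_one).
    rewrite clause_eval_top, (lattice_hom_bot Hpsi), (ia_meet_one HX).
    symmetry. apply (compl_one HX).
  - change (cnf_eval psi (cnf_join [(ha_top, fst c); (snd c, ha_bot)] (cnf_compl cs))
            = - (clause_eval psi c * cnf_eval psi cs)).
    rewrite cnf_eval_join, IH. cbn [cnf_eval fold_right].
    rewrite clause_eval_top, clause_eval_bot, (ia_meet_one HX), (compl_meet HX).
    unfold clause_eval. rewrite (compl_join HX), (compl_involutive HX). reflexivity.
Qed.

Lemma beval_cnf t : beval psi t = cnf_eval psi (cnf_of t).
Proof.
  induction t as [a|s IHs u IHu|s IHs u IHu|s IHs| |]; simpl.
  - rewrite clause_eval_top. symmetry. apply (ia_meet_one HX).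
  - rewrite cnf_eval_join, IHs, IHu. reflexivity.
  - rewrite cnf_eval_app, IHs, IHu. reflexivity.
  - rewrite cnf_eval_compl, IHs. reflexivity.
  - rewrite clause_eval_top, (lattice_hom_bot Hpsi). symmetry. apply (ia_meet_one HX).
  - reflexivity.
Qed.

End Evaluation.

Section Transfer.
Context {X Y : IAsig} (HX : is_IA X) (HY : is_IA Y)
  (psi : L -> X) (chi : L -> Y) (Hpsi : lattice_hom psi) (Hchi : lattice_hom chi)
  (Hmono : forall a b, ia_le (psi a) (psi b) -> ia_le (chi a) (chi b)).

Lemma cnf_eval_one_transfer cs : cnf_eval psi cs = ia_one -> cnf_eval chi cs = ia_one.
Proof.
  induction cs as [|c cs IH]; simpl; intro H; [reflexivity|].
  apply (meet_eq_one HX) in H as [Hc Hcs].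
  rewrite IH by exact Hcs.
  unfold clause_eval in *. apply (compl_join_eq_one HX), Hmono, (compl_join_eq_one HY) in Hc.
  rewrite Hc. apply (ia_meet_one HY).
Qed.

Lemma beval_le_transfer s t :
  ia_le (beval psi s) (beval psi t) -> ia_le (beval chi s) (beval chi t).
Proof.
  rewrite <- (compl_join_eq_one HX), <- (compl_join_eq_one HY).
  change (beval psi (BJoin (BCompl s) t) = ia_one -> beval chi (BJoin (BCompl s) t) = ia_one).
  rewrite (beval_cnf HX psi Hpsi), (beval_cnf HY chi Hchi).
  apply cnf_eval_one_transfer.
Qed.

Lemma beval_eq_transfer s t : beval psi s = beval psi t -> beval chi s = beval chi t.
Proof.
  intro E. apply (le_antisym HY); apply beval_le_transfer; rewrite E; apply (meet_xx HX).
Qed.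

End Transfer.
End ConjunctiveNormalForm.

Lemma int_cnf_eval {A C : IAsig} (HA : is_IA A) (HC : is_IA C)
  (k : Opens HA -> Opens HC) (Hk : is_hom_HA k) (cs : list (Opens HA * Opens HA)) :
  ia_int (cnf_eval (fun a => proj1_sig (k a)) cs) = proj1_sig (k (himp_cnf cs)).
Proof.
  destruct Hk as [km [_ [ki [_ k1]]]].
  unfold cnf_eval, himp_cnf. induction cs as [|c cs IH]; cbn [fold_right].
  - rewrite k1. apply (ia_int_one HC).
  - rewrite (ia_int_meet HC), IH, km, ki. reflexivity.
Qed.

(** * Extending Heyting homomorphisms from O(A) to A^* *)

Section Extension.
Context {A C : IAsig} (HA : is_IA A) (HC : is_IA C)
  (k : Opens HA -> Opens HC) (Hk : is_hom_HA k).

Let val_A := fun a : Opens HA => proj1_sig a.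
Let val_k := fun a : Opens HA => proj1_sig (k a).

Lemma val_k_lattice_hom : lattice_hom val_k.
Proof. apply (lattice_hom_comp k (fun b : Opens HC => proj1_sig b) Hk), open_val_lattice_hom. Qed.

Lemma beval_open_transfer s t : beval val_A s = beval val_A t -> beval val_k s = beval val_k t.
Proof.
  apply (beval_eq_transfer HA HC val_A val_k (open_val_lattice_hom HA) val_k_lattice_hom).
  intros a b Hab. destruct Hk as [km _].
  change (proj1_sig (ha_meet (k a) (k b)) = proj1_sig (k a)).
  rewrite <- km. do 2 f_equal. apply open_el_eq, Hab.
Qed.

Lemma gen_open_beval x : gen_open A x -> exists t, beval val_A t = x.
Proof.
  induction 1 as [x Hx|x y _ [s <-] _ [u <-]|x y _ [s <-] _ [u <-]|x _ [s <-]| | |x _ _].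
  - exists (BVar (exist (fun y => ia_int y = y) x Hx)). reflexivity.
  - exists (BJoin s u). reflexivity.
  - exists (BMeet s u). reflexivity.
  - exists (BCompl s). reflexivity.
  - exists BZero. reflexivity.
  - exists BOne. reflexivity.
  - exists (BVar (op_int HA x)). reflexivity.
Qed.

Lemma beval_gen_open t : gen_open C (beval val_k t).
Proof.
  induction t as [a| | | | |]; simpl.
  - apply go_open, (proj2_sig (k a)).
  - apply go_join; assumption.
  - apply go_meet; assumption.
  - apply go_compl; assumption.
  - apply go_zero.
  - apply go_one.
Qed.

Definition open_ext (x : A) : C :=
  beval val_k (epsilon (inhabits BOne) (fun t => beval val_A t = x)).

Lemma open_ext_beval t : open_ext (beval val_A t) = beval val_k t.
Proof.
  unfold open_ext. apply beval_open_transfer.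
  apply (epsilon_spec (inhabits BOne) (fun s => beval val_A s = beval val_A t)).
  exists t. reflexivity.
Qed.

(* The interior of a normal form is a single open element. *)
Lemma open_ext_int t : open_ext (ia_int (beval val_A t)) = ia_int (beval val_k t).
Proof.
  rewrite (beval_cnf HA val_A (open_val_lattice_hom HA)), (beval_cnf HC val_k val_k_lattice_hom).
  rewrite (int_cnf_eval HA HA (fun a => a) (is_hom_HA_id _)), (int_cnf_eval HA HC k Hk).
  exact (open_ext_beval (BVar (himp_cnf (cnf_of t)))).
Qed.

Lemma open_ext_hom : is_hom_IA (fun x : Bstar A => open_ext (proj1_sig x)).
Proof.
  assert (Hrep : forall x : Bstar A, exists t, beval val_A t = proj1_sig x).
  { intros [x q]. exact (gen_open_beval x q). }
  repeat split.
  - intros x y. destruct (Hrep x) as [s Es], (Hrep y) as [u Eu]. simpl.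
    rewrite <- Es, <- Eu, !open_ext_beval. exact (open_ext_beval (BJoin s u)).
  - intros x y. destruct (Hrep x) as [s Es], (Hrep y) as [u Eu]. simpl.
    rewrite <- Es, <- Eu, !open_ext_beval. exact (open_ext_beval (BMeet s u)).
  - intros x. destruct (Hrep x) as [s Es]. simpl.
    rewrite <- Es, !open_ext_beval. exact (open_ext_beval (BCompl s)).
  - exact (open_ext_beval BZero).
  - exact (open_ext_beval BOne).
  - intros x. destruct (Hrep x) as [s Es]. simpl.
    rewrite <- Es, open_ext_beval. apply open_ext_int.
Qed.

End Extension.

Theorem Opens_hom_extends_to_Bstar {A C : IAsig} (HA : is_IA A) (HC : is_IA C)
  (k : Opens HA -> Opens HC) :
  is_hom_HA k ->
  exists F : Bstar A -> C,
    is_hom_IA F /\ (forall x, gen_open C (F x)) /\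
    forall a, F (open_to_Bstar a) = proj1_sig (k a).
Proof.
  intro Hk. exists (fun x => open_ext HA HC k (proj1_sig x)). split; [| split].
  - apply open_ext_hom; exact Hk.
  - intros [x q]. destruct (gen_open_beval HA x q) as [t <-].
    cbn [proj1_sig]. rewrite (open_ext_beval HA HC k Hk). apply beval_gen_open.
  - intro a. exact (open_ext_beval HA HC k Hk (BVar a)).
Qed.

Lemma Bstar_in_variety (V : IAsig -> Prop) (A : IAsig) :
  IA_variety V -> V A -> V (Bstar A).
Proof.
  intros [_ [_ [HS _]]] HAV.
  apply (HS A (Bstar A) (fun x => proj1_sig x) HAV (Bstar_val_hom A)).
  intros x y E. apply Bstar_eq, E.
Qed.

Lemma star_variety_sub (V : IAsig -> Prop) (A : IAsig) :
  IA_variety V -> star_variety V A -> V A.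
Proof. intros HV H. apply (H V HV). intros C HC; apply HC. Qed.

Lemma Bstar_in_star_variety (V : IAsig -> Prop) (A : IAsig) :
  IA_variety V -> V A -> star_variety V (Bstar A).
Proof.
  intros HV HAV W _ Hgen. apply Hgen. split.
  - apply Bstar_in_variety; assumption.
  - apply Bstar_is_star.
Qed.

Definition HA_lifts (P : HAsig) {C D : HAsig} (f : C -> D) : Prop :=
  forall h : P -> D, is_hom_HA h -> exists k : P -> C, is_hom_HA k /\ forall x, f (k x) = h x.

Lemma HA_lifts_iso (P C C' D D' : HAsig) :
  iso_HA C C' -> iso_HA D D' ->
  (forall f' : C' -> D', is_hom_HA f' -> surjective f' -> HA_lifts P f') ->
  forall f : C -> D, is_hom_HA f -> surjective f -> HA_lifts P f.
Proof.
  intros [iC [HiC [injC surjC]]] [iD [HiD [injD surjD]]] Hlift f Hf Hsurj h Hh.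
  destruct (iso_HA_inverse iC HiC injC surjC) as [jC [HjC EC]].
  destruct (Hlift (fun c => iD (f (jC c)))) with (h := fun x => iD (h x))
    as [k' [Hk' Ek']].
  - apply is_hom_HA_comp; [apply is_hom_HA_comp|]; assumption.
  - intro d'. destruct (surjD d') as [d <-]. destruct (Hsurj d) as [c <-].
    exists (iC c). apply f_equal, f_equal, injC, EC.
  - apply is_hom_HA_comp; assumption.
  - exists (fun x => jC (k' x)). split.
    + apply is_hom_HA_comp; assumption.
    + intro x. apply injD, Ek'.
Qed.

Section Projectivity.
Context (V : IAsig -> Prop) (HV : IA_variety V) (B : IAsig) (HB : is_IA B).

Lemma Bstar_projective_of_Opens_projective :
  projective_HA (gamma V) (Opens HB) -> V B -> projective_IA (star_variety V) (Bstar B).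
Proof.
  intros [_ Hproj] HBV. split; [apply Bstar_in_star_variety; assumption|].
  intros C D HCs HDs f Hf Hsurj h Hh.
  apply star_variety_sub in HCs, HDs; try assumption.
  pose proof (proj1 HV C HCs) as HC. pose proof (proj1 HV D HDs) as HD.
  destruct (Bstar_hom_restrict HC HD (fun x => f (proj1_sig x)))
    as [Of [HOf EOf]]; [apply is_hom_IA_comp; [apply Bstar_val_hom | exact Hf]|].
  assert (Osurj : surjective Of).
  { intros [y Hy]. destruct (Hsurj y) as [c Hc]. exists (op_int HC c).
    apply open_el_eq. rewrite EOf. simpl. destruct Hf as [_ [_ [_ [_ [_ fg]]]]].
    rewrite fg, Hc. exact Hy. }
  destruct (Bstar_hom_restrict HB HD h Hh) as [hO [HhO EhO]].
  destruct (Hproj (Opens HC) (Opens HD)) with (f := Of) (h := hO) as [k [Hk Ek]]; auto.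
  { exists C, HC. split; [assumption | apply iso_HA_refl]. }
  { exists D, HD. split; [assumption | apply iso_HA_refl]. }
  destruct (Opens_hom_extends_to_Bstar HB HC k Hk) as [F [HF [_ EF]]].
  exists F. split; [exact HF|].
  apply Bstar_hom_ext; [apply is_hom_IA_comp; assumption | exact Hh |].
  intro a. rewrite EF, <- EhO, <- Ek, EOf. reflexivity.
Qed.

Lemma Opens_lifts_of_Bstar_projective {A1 A2 : IAsig} (HA1 : is_IA A1) (HA2 : is_IA A2) :
  projective_IA (star_variety V) (Bstar B) -> V A1 -> V A2 ->
  forall f : Opens HA1 -> Opens HA2, is_hom_HA f -> surjective f -> HA_lifts (Opens HB) f.
Proof.
  intros [_ Hproj] HA1V HA2V f Hf Hsurj h Hh.
  destruct (Opens_hom_extends_to_Bstar HA1 HA2 f Hf) as [F [HF [GF EF]]].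
  destruct (Bstar_corestrict F HF GF) as [G [HG EG]].
  destruct (Opens_hom_extends_to_Bstar HB HA2 h Hh) as [H [HH [GH EH]]].
  destruct (Bstar_corestrict H HH GH) as [Hs [HHs EHs]].
  assert (Gsurj : surjective G).
  { apply Bstar_hom_surjective; [exact HG|].
    intro b. destruct (Hsurj b) as [o <-]. exists (open_to_Bstar o).
    apply Bstar_eq. rewrite EG. apply EF. }
  destruct (Hproj (Bstar A1) (Bstar A2)) with (f := G) (h := Hs) as [K [HK EK]];
    auto using Bstar_in_star_variety.
  destruct (Bstar_hom_restrict HB HA1 (fun x => proj1_sig (K x))) as [kappa [Hkappa Ekappa]].
  { apply is_hom_IA_comp; [exact HK | apply Bstar_val_hom]. }
  exists kappa. split; [exact Hkappa|].
  intro a. apply open_el_eq.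
  assert (Ebs : open_to_Bstar (kappa a) = K (open_to_Bstar a)) by (apply Bstar_eq, Ekappa).
  rewrite <- EF, Ebs, <- EG, EK, EHs, EH. reflexivity.
Qed.

Lemma Opens_projective_of_Bstar_projective :
  projective_IA (star_variety V) (Bstar B) -> V B -> projective_HA (gamma V) (Opens HB).
Proof.
  intros Hproj HBV. split; [exists B, HB; split; [assumption | apply iso_HA_refl]|].
  intros C D [A1 [HA1 [HA1V Hiso1]]] [A2 [HA2 [HA2V Hiso2]]].
  apply (HA_lifts_iso _ _ _ _ _ Hiso1 Hiso2).
  apply Opens_lifts_of_Bstar_projective; assumption.
Qed.

End Projectivity.

Theorem lemma5p9 (V : IAsig -> Prop) (HV : IA_variety V)
  (B : IAsig) (HBV : V B) (HB : is_IA B) :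
  projective_HA (gamma V) (Opens HB) <-> projective_IA (star_variety V) (Bstar B).
Proof.
  split; intro Hproj.
  - exact (Bstar_projective_of_Opens_projective V HV B HB Hproj HBV).
  - exact (Opens_projective_of_Bstar_projective V HV B HB Hproj HBV).
Qed.
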